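(* Let $X\in\mathbb{R}^{n\times p}$, $y\in\mathbb{R}^n$, $\beta\in\mathbb{R}^p$ with $s=|S|\ge 1$, and put $\epsilon=y-X\beta$. Let $\lambda,\rho_1,\rho_2\ge 0$, $\tau\in[0,1)$, and let $\widehat\beta^{\tau}$ be a minimizer of $\beta'\mapsto V_\tau(\beta')$ (for $\tau=0$, of $V_0$). Suppose $1\le\max(q_R,\widehat s^{\tau})\le p$ and $\kappa_n+\lambda n^{-1}>0$. Then $$\|\widehat\beta^{\tau}-\beta\|_2\le\frac{q_R^{1/2}}{\kappa_n+\lambda n^{-1}}\left\{4\Big[1+\Big(\frac{\widehat s^{\tau}}{4s}\Big)^{1/2}\Big]\frac{\|X^T\epsilon\|_\infty}{n}+2\max_{j\in S}|\beta_j|\frac{\lambda}{n}+\Big[\frac{2c_2^{-1}+1}{\log(\tau^{-1})}+c_3^{-1}\Big]\frac{\rho_1+\rho_2}{n}\right\},$$ where $\kappa_n=n^{-1}\min_{\|w\|_2=1}w^TX^TXw$, $c_2=\min_{j\in\widehat S^{\tau}}|\widehat\beta^{\tau}_j|$, $c_3=\min_{j\in S}|\beta_j|$, and for $\tau=0$ the term $1/\log(\tau^{-1})$ is read as $0$.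
   Context: Groups: $G_1,\dots,G_m$ are pairwise disjoint nonempty subsets of $\{1,\dots,p\}$ whose union is $\{1,\dots,p\}$, with sizes $q_k=|G_k|$; $\beta_{G_k}$ (resp. $X_{G_k}$) denotes the subvector of $\beta$ (resp. the columns of $X$) indexed by $G_k$. For $\tau\in(0,1)$ define $$V_\tau(\beta')=\|y-X\beta'\|_2^2+\lambda\|\beta'\|_2^2+\rho_1\sum_{j=1}^p\frac{\log(1+\tau^{-1}|\beta'_j|)}{\log(1+\tau^{-1})}+\rho_2\sum_{k=1}^m\sqrt{q_k}\,\frac{\log(1+\tau^{-1}\|\beta'_{G_k}\|_2)}{\log(1+\tau^{-1})},$$ and $V_0(\beta')=\lim_{\tau\to0}V_\tau(\beta')=\|y-X\beta'\|_2^2+\lambda\|\beta'\|_2^2+\rho_1\#\{j:\beta'_j\neq0\}+\rho_2\sum_k\sqrt{q_k}\,\mathbb{I}\{\|\beta'_{G_k}\|_2\neq0\}$ (a minimizer of $V_0$ is called the gvsnss estimator). $\widehat S^{\tau}=\{j:\widehat\beta^{\tau}_j\ne0\}$, $\widehat s^{\tau}=|\widehat S^{\tau}|$. For the (true) vector $\beta$: $S=\{j:\beta_j\neq0\}$, $R=\{k:\|\beta_{G_k}\|_2\neq0\}$ (the groups covering $S$), $G_R=\bigcup_{k\in R}G_k$, $q_R=|G_R|=\sum_{k\in R}q_k$. *)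

From Stdlib Require Import Reals Lra Lia Arith.
Open Scope R_scope.

(* Indices are 0-based: j ranges over 0..p-1, i over 0..n-1, k over 0..m-1. *)

Fixpoint fsum (k : nat) (f : nat -> R) : R :=
  match k with O => 0 | S k' => fsum k' f + f k' end.

Fixpoint nsum (k : nat) (f : nat -> nat) : nat :=
  match k with O => O | S k' => (nsum k' f + f k')%nat end.

Definition nzb (x : R) : bool := if Req_dec_T x 0 then false else true.

Definition card_nz (k : nat) (b : nat -> R) : nat :=
  nsum k (fun j => if nzb (b j) then 1%nat else 0%nat).

Fixpoint min_abs_supp (k : nat) (b : nat -> R) : option R :=
  match k with
  | O => None
  | S k' =>
      let r := min_abs_supp k' b in
      if nzb (b k') then
        match r with None => Some (Rabs (b k')) | Some c => Some (Rmin c (Rabs (b k'))) end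
      else r
  end.

Fixpoint max_abs_supp (k : nat) (b : nat -> R) : option R :=
  match k with
  | O => None
  | S k' =>
      let r := max_abs_supp k' b in
      if nzb (b k') then
        match r with None => Some (Rabs (b k')) | Some c => Some (Rmax c (Rabs (b k'))) end
      else r
  end.

(* reciprocal of a minimum; the min over the empty set is +infinity, with reciprocal 0 *)
Definition inv_min_abs_supp (k : nat) (b : nat -> R) : R :=
  match min_abs_supp k b with None => 0 | Some c => / c end.

Definition max_abs_on_supp (k : nat) (b : nat -> R) : R :=
  match max_abs_supp k b with None => 0 | Some c => c end.

(* max over i < k of f i (f nonnegative here; default 0) *)
Fixpoint fmax (k : nat) (f : nat -> R) : R :=
  match k with O => 0 | S k' => Rmax (fmax k' f) (f k') end.

(* Groups: grp j = k means j belongs to G_k (a partition of {0..p-1} into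
   m nonempty groups). *)
Definition is_group_partition (p m : nat) (grp : nat -> nat) : Prop :=
  (forall j, (j < p)%nat -> (grp j < m)%nat) /\
  (forall k, (k < m)%nat -> exists j, (j < p)%nat /\ grp j = k).

Definition gsize (p : nat) (grp : nat -> nat) (k : nat) : nat :=
  nsum p (fun j => if Nat.eqb (grp j) k then 1%nat else 0%nat).

Definition gnorm (p : nat) (grp : nat -> nat) (b : nat -> R) (k : nat) : R :=
  sqrt (fsum p (fun j => if Nat.eqb (grp j) k then b j ^ 2 else 0)).

Definition qR (p m : nat) (grp : nat -> nat) (b : nat -> R) : nat :=
  nsum m (fun k => if nzb (gnorm p grp b k) then gsize p grp k else 0%nat).

Definition Xmul (p : nat) (X : nat -> nat -> R) (b : nat -> R) (i : nat) : R :=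
  fsum p (fun j => X i j * b j).

Definition norm2 (p : nat) (b : nat -> R) : R := sqrt (fsum p (fun j => b j ^ 2)).

Definition fit (n p : nat) (X : nat -> nat -> R) (y : nat -> R) (lam : R) (b : nat -> R) : R :=
  fsum n (fun i => (y i - Xmul p X b i) ^ 2) + lam * fsum p (fun j => b j ^ 2).

Definition Vtau (n p m : nat) (grp : nat -> nat) (X : nat -> nat -> R) (y : nat -> R)
  (lam rho1 rho2 tau : R) (b : nat -> R) : R :=
  fit n p X y lam b
  + rho1 * fsum p (fun j => ln (1 + / tau * Rabs (b j)) / ln (1 + / tau))
  + rho2 * fsum m (fun k => sqrt (INR (gsize p grp k))
                            * (ln (1 + / tau * gnorm p grp b k) / ln (1 + / tau))).

Definition V0 (n p m : nat) (grp : nat -> nat) (X : nat -> nat -> R) (y : nat -> R)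
  (lam rho1 rho2 : R) (b : nat -> R) : R :=
  fit n p X y lam b
  + rho1 * INR (card_nz p b)
  + rho2 * fsum m (fun k => sqrt (INR (gsize p grp k))
                            * (if nzb (gnorm p grp b k) then 1 else 0)).

Definition Vobj (n p m : nat) (grp : nat -> nat) (X : nat -> nat -> R) (y : nat -> R)
  (lam rho1 rho2 tau : R) (b : nat -> R) : R :=
  if Req_dec_T tau 0 then V0 n p m grp X y lam rho1 rho2 b
  else Vtau n p m grp X y lam rho1 rho2 tau b.

Definition inv_log_inv (tau : R) : R :=
  if Req_dec_T tau 0 then 0 else / ln (/ tau).

(* kappa is  n^{-1} min_{||w||_2 = 1} w^T X^T X w  (w^T X^T X w = ||X w||_2^2) *)
Definition is_kappa (n p : nat) (X : nat -> nat -> R) (kappa : R) : Prop :=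
  (exists w : nat -> R, norm2 p w = 1 /\
      fsum n (fun i => Xmul p X w i ^ 2) / INR n = kappa) /\
  (forall w : nat -> R, norm2 p w = 1 ->
      kappa <= fsum n (fun i => Xmul p X w i ^ 2) / INR n).

Definition XtEps_inf (n p : nat) (X : nat -> nat -> R) (y beta : nat -> R) : R :=
  fmax p (fun j => Rabs (fsum n (fun i => X i j * (y i - Xmul p X beta i)))).

From Stdlib Require Import Reals Lra Lia Classical.
Open Scope R_scope.

(* Write d = bhat - beta, N = ||d||_2 and g = X^T (y - X beta).  Comparing the
   objective at its minimiser bhat with its value at the truth beta gives the
   basic inequality
     ||X d||^2 + lam N^2 <= 2 <d, g> - 2 lam <beta, d> + rho1 (pen gap) + rho2 (group pen gap).
   Each term on the right is at most a constant times N: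
   - <d, g> <= ||g||_inf (sqrt s + sqrt shat) N, because d is supported on the
     union of the supports of beta and bhat (Cauchy-Schwarz on each support);
   - -<beta, d> <= max_{j in S} |beta_j| sqrt s N;
   - each coordinate (resp. group) penalty gap is bounded by
     K |d_j| (resp. K ||d_{G_k}||) on the support of beta (resp. on R), with
     K = (2/c2 + 1)/log(1/tau) + 1/c3, using the concavity of log(1 + t/tau);
     Cauchy-Schwarz turns these into K sqrt s N and K sqrt q_R N.
   The left side is at least (n kappa + lam) N^2 by definition of kappa; dividing
   by N and using s <= q_R and sqrt shat <= 2 sqrt q_R sqrt(shat/(4s)) yields the
   theorem. *)

Lemma fsum_ext k f g : (forall j, (j < k)%nat -> f j = g j) -> fsum k f = fsum k g.
Proof. induction k; simpl; intros H; auto. rewrite IHk by (intros; apply H; lia). rewrite H by lia. auto. Qed.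

Lemma fsum_le k f g : (forall j, (j < k)%nat -> f j <= g j) -> fsum k f <= fsum k g.
Proof.
  induction k; simpl; intros H; [lra|].
  assert (fsum k f <= fsum k g) by (apply IHk; intros; apply H; lia).
  specialize (H k ltac:(lia)). lra.
Qed.

Lemma fsum_plus k f g : fsum k (fun j => f j + g j) = fsum k f + fsum k g.
Proof. induction k; simpl; [lra|]. rewrite IHk; ring. Qed.

Lemma fsum_scal k c f : fsum k (fun j => c * f j) = c * fsum k f.
Proof. induction k; simpl; [ring|]. rewrite IHk; ring. Qed.

Lemma fsum_minus k f g : fsum k (fun j => f j - g j) = fsum k f - fsum k g.
Proof. induction k; simpl; [lra|]. rewrite IHk; ring. Qed.

Lemma fsum_opp k f : fsum k (fun j => - f j) = - fsum k f.
Proof. induction k; simpl; [lra|]. rewrite IHk; ring. Qed.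

Lemma fsum_zero k : fsum k (fun _ => 0) = 0.
Proof. induction k; simpl; [lra|]. rewrite IHk; ring. Qed.

Lemma fsum_nonneg k f : (forall j, (j < k)%nat -> 0 <= f j) -> 0 <= fsum k f.
Proof. intros H. rewrite <- (fsum_zero k). apply fsum_le. auto. Qed.

Lemma fsum_term k f j : (forall j, (j < k)%nat -> 0 <= f j) -> (j < k)%nat -> f j <= fsum k f.
Proof.
  induction k; simpl; intros H Hj; [lia|].
  assert (0 <= fsum k f) by (apply fsum_nonneg; intros; apply H; lia).
  destruct (Nat.eq_dec j k) as [->|Hne]; [lra|].
  assert (f j <= fsum k f) by (apply IHk; [intros; apply H; lia | lia]).
  specialize (H k ltac:(lia)). lra.
Qed.

Lemma fsum_swap a b (F : nat -> nat -> R) :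
  fsum a (fun i => fsum b (fun j => F i j)) = fsum b (fun j => fsum a (fun i => F i j)).
Proof. induction a; simpl; [rewrite fsum_zero; auto|]. rewrite IHa, <- fsum_plus. auto. Qed.

Lemma INR_nsum k f : INR (nsum k f) = fsum k (fun j => INR (f j)).
Proof. induction k; simpl; auto. rewrite plus_INR, IHk. auto. Qed.

Lemma fsum_delta m t (c : nat -> R) :
  fsum m (fun k => if Nat.eqb t k then c k else 0) = if Nat.ltb t m then c t else 0.
Proof.
  induction m; simpl.
  - destruct (Nat.ltb_spec t 0); [lia | auto].
  - rewrite IHm. destruct (Nat.eqb_spec t m) as [->|Hne].
    + destruct (Nat.ltb_spec m m); destruct (Nat.ltb_spec m (S m)); try lia; ring.
    + destruct (Nat.ltb_spec t m); destruct (Nat.ltb_spec t (S m)); try lia; ring.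
Qed.

(* Cauchy-Schwarz, via 2 sqrt(A) sqrt(B) a_j b_j <= a_j^2 B + b_j^2 A summed over j. *)
Lemma cauchy_schwarz k a b : fsum k (fun j => a j * b j) <=
  sqrt (fsum k (fun j => a j ^ 2)) * sqrt (fsum k (fun j => b j ^ 2)).
Proof.
  set (A := fsum k (fun j => a j ^ 2)). set (B := fsum k (fun j => b j ^ 2)).
  assert (HA : 0 <= A) by (apply fsum_nonneg; intros; nra).
  assert (HB : 0 <= B) by (apply fsum_nonneg; intros; nra).
  assert (sA := sqrt_sqrt A HA). assert (sB := sqrt_sqrt B HB).
  assert (pA := sqrt_pos A). assert (pB := sqrt_pos B).
  destruct (Req_dec (sqrt A * sqrt B) 0) as [Z|NZ].
  - (* one of the vectors vanishes, so does every product a_j b_j *)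
    assert (Hab : forall j, (j < k)%nat -> a j * b j = 0).
    { intros j Hj.
      assert (a j ^ 2 <= A) by (apply (fsum_term k (fun j => a j ^ 2)); auto; intros; nra).
      assert (b j ^ 2 <= B) by (apply (fsum_term k (fun j => b j ^ 2)); auto; intros; nra).
      destruct (Rmult_integral _ _ Z) as [Ha|Hb].
      - assert (Ea : a j = 0) by nra. rewrite Ea; ring.
      - assert (Eb : b j = 0) by nra. rewrite Eb; ring. }
    rewrite (fsum_ext k _ (fun _ => 0) Hab), fsum_zero, Z. lra.
  - assert (P : 0 < sqrt A * sqrt B) by (pose proof (Rmult_le_pos _ _ pA pB); lra).
    assert (H : fsum k (fun j => 2 * (sqrt A * sqrt B) * (a j * b j)) <=
                fsum k (fun j => B * a j ^ 2 + A * b j ^ 2)).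
    { apply fsum_le. intros j _.
      assert (0 <= (a j * sqrt B - b j * sqrt A) ^ 2) by apply pow2_ge_0. nra. }
    rewrite fsum_scal, fsum_plus, !fsum_scal in H. fold A B in H.
    apply (Rmult_le_reg_l (2 * (sqrt A * sqrt B))); [lra|].
    nra.
Qed.

Lemma norm2_sq k b : norm2 k b * norm2 k b = fsum k (fun j => b j ^ 2).
Proof. apply sqrt_sqrt. apply fsum_nonneg. intros; nra. Qed.

Lemma norm2_ge k b j : (j < k)%nat -> Rabs (b j) <= norm2 k b.
Proof.
  intros Hj. rewrite <- sqrt_Rsqr_abs. apply sqrt_le_1_alt.
  rewrite Rsqr_pow2. apply (fsum_term k (fun j => b j ^ 2)); auto. intros; nra.
Qed.

Lemma norm2_triangle k u w : norm2 k (fun j => u j - w j) <= norm2 k u + norm2 k w.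
Proof.
  assert (C := cauchy_schwarz k u (fun j => - w j)). cbv beta in C.
  rewrite (fsum_ext k (fun j => (- w j) ^ 2) (fun j => w j ^ 2)) in C by (intros; ring).
  fold (norm2 k u) (norm2 k w) in C.
  assert (E : fsum k (fun j => (u j - w j) ^ 2) =
     fsum k (fun j => u j ^ 2) + 2 * fsum k (fun j => u j * - w j) + fsum k (fun j => w j ^ 2)).
  { rewrite <- fsum_scal, <- !fsum_plus. apply fsum_ext. intros; ring. }
  unfold norm2 at 1. rewrite E, <- (norm2_sq k u), <- (norm2_sq k w).
  assert (pu := sqrt_pos (fsum k (fun j => u j ^ 2))).
  assert (pw := sqrt_pos (fsum k (fun j => w j ^ 2))). fold (norm2 k u) (norm2 k w) in pu, pw.
  rewrite <- (sqrt_square (norm2 k u + norm2 k w)) by lra.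
  apply sqrt_le_1_alt. nra.
Qed.

Lemma nzb_true x : nzb x = true -> x <> 0.
Proof. unfold nzb; destruct (Req_dec_T x 0); congruence. Qed.

Lemma nzb_false x : nzb x = false -> x = 0.
Proof. unfold nzb; destruct (Req_dec_T x 0); congruence. Qed.

Lemma nzb_nz x : x <> 0 -> nzb x = true.
Proof. unfold nzb; destruct (Req_dec_T x 0); congruence. Qed.

Definition ind (b : bool) : R := if b then 1 else 0.

Lemma ind_nonneg b : 0 <= ind b.
Proof. destruct b; simpl; lra. Qed.

Lemma ind_sq b : ind b ^ 2 = ind b.
Proof. destruct b; simpl; ring. Qed.

Lemma card_nz_eq k b : INR (card_nz k b) = fsum k (fun j => ind (nzb (b j))).
Proof. unfold card_nz. rewrite INR_nsum. apply fsum_ext. intros. unfold ind. destruct (nzb (b j)); auto. Qed.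

Lemma support_sum_le k b v :
  fsum k (fun j => ind (nzb (b j)) * Rabs (v j)) <= sqrt (INR (card_nz k b)) * norm2 k v.
Proof.
  eapply Rle_trans; [apply (cauchy_schwarz k (fun j => ind (nzb (b j))) (fun j => Rabs (v j)))|].
  right. rewrite card_nz_eq. f_equal.
  - f_equal. apply fsum_ext. intros. apply ind_sq.
  - unfold norm2. f_equal. apply fsum_ext. intros. rewrite <- Rsqr_pow2, <- Rsqr_abs, Rsqr_pow2. auto.
Qed.

Lemma min_abs_supp_spec k b : match min_abs_supp k b with
  | None => forall j, (j < k)%nat -> b j = 0
  | Some c => 0 < c /\ forall j, (j < k)%nat -> b j <> 0 -> c <= Rabs (b j) end.
Proof.
  induction k; simpl; [intros; lia|].
  destruct (nzb (b k)) eqn:E; [apply nzb_true in E | apply nzb_false in E];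
    destruct (min_abs_supp k b) as [c|].
  - destruct IHk as [Hc H]. split; [apply Rmin_pos; auto; apply Rabs_pos_lt; auto|].
    intros j Hj Hb. destruct (Nat.eq_dec j k) as [->|]; [apply Rmin_r|].
    eapply Rle_trans; [apply Rmin_l|]. apply H; auto; lia.
  - split; [apply Rabs_pos_lt; auto|].
    intros j Hj Hb. destruct (Nat.eq_dec j k) as [->|]; [lra|]. exfalso. apply Hb, IHk. lia.
  - destruct IHk as [Hc H]. split; auto. intros j Hj Hb.
    destruct (Nat.eq_dec j k) as [->|]; [congruence|]. apply H; auto; lia.
  - intros j Hj. destruct (Nat.eq_dec j k) as [->|]; auto. apply IHk; lia.
Qed.

Lemma inv_min_spec k b : 0 <= inv_min_abs_supp k b /\
  forall j, (j < k)%nat -> b j <> 0 -> 1 <= inv_min_abs_supp k b * Rabs (b j).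
Proof.
  unfold inv_min_abs_supp. assert (H := min_abs_supp_spec k b).
  destruct (min_abs_supp k b) as [c|].
  - destruct H as [Hc H]. split; [left; apply Rinv_0_lt_compat; auto|].
    intros j Hj Hb. specialize (H j Hj Hb). apply (Rmult_le_reg_l c); auto.
    rewrite <- Rmult_assoc, Rinv_r by lra. lra.
  - split; [lra|]. intros j Hj Hb. exfalso; auto.
Qed.

Lemma max_abs_supp_spec k b : match max_abs_supp k b with
  | None => forall j, (j < k)%nat -> b j = 0
  | Some c => 0 <= c /\ forall j, (j < k)%nat -> Rabs (b j) <= c end.
Proof.
  induction k; simpl; [intros; lia|].
  destruct (nzb (b k)) eqn:E; [|apply nzb_false in E]; destruct (max_abs_supp k b) as [c|].
  - destruct IHk as [Hc H]. split; [eapply Rle_trans; [|apply Rmax_l]; auto|].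
    intros j Hj. destruct (Nat.eq_dec j k) as [->|]; [apply Rmax_r|].
    eapply Rle_trans; [|apply Rmax_l]. apply H; lia.
  - split; [apply Rabs_pos|].
    intros j Hj. destruct (Nat.eq_dec j k) as [->|]; [lra|].
    rewrite IHk by lia. rewrite Rabs_R0; apply Rabs_pos.
  - destruct IHk as [Hc H]. split; auto. intros j Hj.
    destruct (Nat.eq_dec j k) as [->|]; [rewrite E, Rabs_R0; auto|]. apply H; lia.
  - intros j Hj. destruct (Nat.eq_dec j k) as [->|]; auto. apply IHk; lia.
Qed.

Lemma max_on_spec k b : 0 <= max_abs_on_supp k b /\
  forall j, (j < k)%nat -> Rabs (b j) <= max_abs_on_supp k b.
Proof.
  unfold max_abs_on_supp. assert (H := max_abs_supp_spec k b).
  destruct (max_abs_supp k b) as [c|]; auto.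
  split; [lra|]. intros j Hj. rewrite H by auto. rewrite Rabs_R0; lra.
Qed.

Lemma fmax_spec k f : 0 <= fmax k f /\ forall j, (j < k)%nat -> f j <= fmax k f.
Proof.
  induction k; simpl; [split; [lra | intros; lia]|].
  destruct IHk as [H0 H]. split; [eapply Rle_trans; [|apply Rmax_l]; auto|].
  intros j Hj. destruct (Nat.eq_dec j k) as [->|]; [apply Rmax_r|].
  eapply Rle_trans; [|apply Rmax_l]. apply H; lia.
Qed.

Lemma gnorm_eq p grp b k :
  gnorm p grp b k = norm2 p (fun j => if Nat.eqb (grp j) k then b j else 0).
Proof. unfold gnorm, norm2. f_equal. apply fsum_ext. intros. destruct (Nat.eqb (grp j) k); ring. Qed.

Lemma gnorm_pos p grp b k : 0 <= gnorm p grp b k.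
Proof. apply sqrt_pos. Qed.

Lemma gnorm_ge p grp b k j : (j < p)%nat -> grp j = k -> Rabs (b j) <= gnorm p grp b k.
Proof.
  intros Hj Hg. rewrite gnorm_eq.
  eapply Rle_trans; [|apply (norm2_ge p _ j Hj)]. simpl. rewrite Hg, Nat.eqb_refl. lra.
Qed.

Lemma gnorm_triangle p grp bh be k :
  gnorm p grp be k <= gnorm p grp bh k + gnorm p grp (fun j => bh j - be j) k.
Proof.
  rewrite !gnorm_eq. eapply Rle_trans; [|apply norm2_triangle].
  right. unfold norm2. f_equal. apply fsum_ext. intros. destruct (Nat.eqb (grp j) k); ring.
Qed.

Lemma gnorm_nz p grp b k : gnorm p grp b k <> 0 ->
  exists j, (j < p)%nat /\ grp j = k /\ b j <> 0.
Proof.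
  intros H. apply NNPP. intros C. apply H. unfold gnorm.
  rewrite (fsum_ext p _ (fun _ => 0)); [rewrite fsum_zero; apply sqrt_0|].
  intros j Hj. destruct (Nat.eqb_spec (grp j) k); auto.
  destruct (Req_dec (b j) 0) as [Z|Z]; [rewrite Z; ring|]. exfalso. eauto.
Qed.

Lemma inv_min_gnorm p grp b k : gnorm p grp b k <> 0 ->
  1 <= inv_min_abs_supp p b * gnorm p grp b k.
Proof.
  intros Z. destruct (gnorm_nz p grp b k Z) as [j [Hj [Hg Hb]]].
  destruct (inv_min_spec p b) as [P H]. specialize (H j Hj Hb).
  assert (Rabs (b j) <= gnorm p grp b k) by (apply gnorm_ge; auto).
  assert (inv_min_abs_supp p b * Rabs (b j) <= inv_min_abs_supp p b * gnorm p grp b k)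
    by (apply Rmult_le_compat_l; auto).
  lra.
Qed.

(* The squared group norms add up to at most the squared norm (groups are disjoint). *)
Lemma group_norms_sq p m grp v :
  fsum m (fun k => gnorm p grp v k ^ 2) <= norm2 p v * norm2 p v.
Proof.
  rewrite norm2_sq.
  rewrite (fsum_ext m _ (fun k => fsum p (fun j => if Nat.eqb (grp j) k then v j ^ 2 else 0))).
  2:{ intros k _. unfold gnorm. rewrite <- Rsqr_pow2, Rsqr_sqrt; auto.
      apply fsum_nonneg. intros. destruct (Nat.eqb (grp j) k); nra. }
  rewrite fsum_swap. apply fsum_le. intros j _.
  rewrite (fsum_delta m (grp j) (fun _ => v j ^ 2)). destruct (Nat.ltb (grp j) m); nra.
Qed.

Lemma active_groups_sum_le p m grp b v :
  fsum m (fun k => (sqrt (INR (gsize p grp k)) * ind (nzb (gnorm p grp b k))) * gnorm p grp v k)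
  <= sqrt (INR (qR p m grp b)) * norm2 p v.
Proof.
  eapply Rle_trans; [apply cauchy_schwarz|]. apply Rmult_le_compat.
  - apply sqrt_pos.
  - apply sqrt_pos.
  - right. f_equal. unfold qR. rewrite INR_nsum. apply fsum_ext. intros k _.
    rewrite Rpow_mult_distr, ind_sq, <- Rsqr_pow2, Rsqr_sqrt by apply pos_INR.
    destruct (nzb (gnorm p grp b k)); simpl; ring.
  - rewrite <- (sqrt_square (norm2 p v)) by apply sqrt_pos.
    apply sqrt_le_1_alt. apply group_norms_sq.
Qed.

(* Every support coordinate lies in an active group, so s <= q_R. *)
Lemma card_nz_le_qR p m grp b : is_group_partition p m grp ->
  INR (card_nz p b) <= INR (qR p m grp b).
Proof.
  intros [Hg _]. rewrite card_nz_eq. unfold qR. rewrite INR_nsum.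
  apply Rle_trans with (fsum p (fun j => fsum m (fun k =>
      if Nat.eqb (grp j) k then ind (nzb (gnorm p grp b k)) else 0))).
  - apply fsum_le. intros j Hj. rewrite (fsum_delta m (grp j) (fun k => ind (nzb (gnorm p grp b k)))).
    destruct (nzb (b j)) eqn:E.
    + apply nzb_true in E. specialize (Hg j Hj). destruct (Nat.ltb_spec (grp j) m); try lia.
      assert (0 < Rabs (b j)) by (apply Rabs_pos_lt; auto).
      assert (Rabs (b j) <= gnorm p grp b (grp j)) by (apply gnorm_ge; auto).
      rewrite nzb_nz by lra. simpl; lra.
    + simpl. destruct (Nat.ltb (grp j) m); [apply ind_nonneg|lra].
  - rewrite fsum_swap. apply fsum_le. intros k _.
    destruct (nzb (gnorm p grp b k)); simpl.
    + unfold gsize. rewrite INR_nsum. right. apply fsum_ext. intros.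
      destruct (Nat.eqb (grp j) k); simpl; ring.
    + rewrite (fsum_ext p _ (fun _ => 0)) by (intros; destruct (Nat.eqb (grp j) k); ring).
      rewrite fsum_zero; lra.
Qed.

Definition pen (tau x : R) : R :=
  if Req_dec_T tau 0 then ind (nzb x) else ln (1 + / tau * Rabs x) / ln (1 + / tau).

Lemma Vobj_eq n p m grp X y lam rho1 rho2 tau b :
  Vobj n p m grp X y lam rho1 rho2 tau b = fit n p X y lam b
    + rho1 * fsum p (fun j => pen tau (b j))
    + rho2 * fsum m (fun k => sqrt (INR (gsize p grp k)) * pen tau (gnorm p grp b k)).
Proof.
  unfold Vobj, pen. destruct (Req_dec_T tau 0) as [E|E].
  - unfold V0. rewrite card_nz_eq. reflexivity.
  - unfold Vtau. do 2 f_equal. apply fsum_ext. intros.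
    rewrite (Rabs_pos_eq (gnorm p grp b j)) by apply gnorm_pos. reflexivity.
Qed.

Lemma ln_le_mono x y : 0 < x -> x <= y -> ln x <= ln y.
Proof. intros Hx [H|H]; [left; apply ln_increasing; auto | subst; lra]. Qed.

Lemma ln_1_plus_le t : -1 < t -> ln (1 + t) <= t.
Proof.
  intros Ht. destruct (Rle_or_lt (ln (1 + t)) t) as [H|H]; auto.
  apply exp_increasing in H. rewrite exp_ln in H by lra. assert (E := exp_ineq1_le t). lra.
Qed.

(* Concavity of the logarithm: the tangent at B lies above the graph. *)
Lemma ln_sub_le A B : 0 < A -> 0 < B -> ln A - ln B <= (A - B) / B.
Proof.
  intros HA HB. replace A with (B * (A / B)) at 1 by (field; lra).
  rewrite ln_mult by (try apply Rdiv_lt_0_compat; auto).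
  replace (A / B) with (1 + (A - B) / B) by (field; lra).
  assert (ln (1 + (A - B) / B) <= (A - B) / B); [|lra].
  apply ln_1_plus_le. apply (Rmult_lt_reg_l B); auto. field_simplify; lra.
Qed.

Section LogPenalty.
Variable tau : R.
Hypothesis Htau : 0 < tau < 1.

Lemma inv_tau_pos : 0 < / tau.
Proof. apply Rinv_0_lt_compat; lra. Qed.

Lemma ln_inv_tau_pos : 0 < ln (/ tau).
Proof. rewrite <- ln_1. apply ln_increasing; [lra|]. rewrite <- Rinv_1. apply Rinv_lt_contravar; lra. Qed.

Lemma ln_norm_pos : 0 < ln (1 + / tau).
Proof. assert (H := inv_tau_pos). rewrite <- ln_1. apply ln_increasing; lra. Qed.

Lemma div_ln_norm_le a : 0 <= a -> a / ln (1 + / tau) <= a * / ln (/ tau).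
Proof.
  intros Ha. apply Rmult_le_compat_l; auto. apply Rinv_le_contravar; [apply ln_inv_tau_pos|].
  apply ln_le_mono; [apply inv_tau_pos | lra].
Qed.

Lemma ln_pen_nonneg v : 0 <= v -> 0 <= ln (1 + / tau * v).
Proof. intros Hv. assert (H := inv_tau_pos). rewrite <- ln_1. apply ln_le_mono; nra. Qed.

Lemma ln_pen_increment u v d : 0 < u -> 0 <= v -> 0 <= d -> v <= u + d ->
  ln (1 + / tau * v) - ln (1 + / tau * u) <= d / u.
Proof.
  intros Hu Hv Hd Hvu. assert (it := inv_tau_pos).
  assert (ln (1 + / tau * v) <= ln (1 + / tau * (u + d))) by (apply ln_le_mono; nra).
  assert (H2 := ln_sub_le (1 + / tau * (u + d)) (1 + / tau * u) ltac:(nra) ltac:(nra)).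
  replace ((1 + / tau * (u + d) - (1 + / tau * u)) / (1 + / tau * u)) with (d / (tau + u))
    in H2 by (field; lra).
  assert (d / (tau + u) <= d / u) by (apply Rmult_le_compat_l; auto; apply Rinv_le_contravar; lra).
  lra.
Qed.

Lemma ln_pen_growth v : 0 <= v -> ln (1 + / tau * v) <= ln (1 + / tau) + v.
Proof.
  intros Hv. assert (it := inv_tau_pos). destruct (Rle_or_lt v 1).
  - assert (ln (1 + / tau * v) <= ln (1 + / tau)) by (apply ln_le_mono; nra). lra.
  - assert (H1 := ln_pen_increment 1 v (v - 1) ltac:(lra) Hv ltac:(lra) ltac:(lra)).
    rewrite Rmult_1_r, Rdiv_1_r in H1. lra.
Qed.
End LogPenalty.

Lemma inv_log_inv_nonneg tau : 0 <= tau < 1 -> 0 <= inv_log_inv tau.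
Proof.
  intros H. unfold inv_log_inv. destruct (Req_dec_T tau 0); [lra|].
  left. apply Rinv_0_lt_compat, ln_inv_tau_pos. lra.
Qed.

Lemma pen_nonneg tau x : 0 <= tau < 1 -> 0 <= pen tau x.
Proof.
  intros Ht. unfold pen. destruct (Req_dec_T tau 0); [apply ind_nonneg|].
  apply Rmult_le_pos; [apply ln_pen_nonneg; [lra | apply Rabs_pos]|].
  left. apply Rinv_0_lt_compat, ln_norm_pos. lra.
Qed.

Lemma pen_0 tau : pen tau 0 = 0.
Proof.
  unfold pen, ind. rewrite Rabs_R0, Rmult_0_r, Rplus_0_r, ln_1.
  destruct (Req_dec_T tau 0); [|lra]. unfold nzb. destruct (Req_dec_T 0 0); [auto | lra].
Qed.

Lemma pen_le tau x : 0 <= tau < 1 -> pen tau x <= 1 + Rabs x * inv_log_inv tau.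
Proof.
  intros Ht. assert (Hx := Rabs_pos x). assert (L := inv_log_inv_nonneg tau Ht).
  unfold pen, inv_log_inv in *. destruct (Req_dec_T tau 0).
  - destruct (nzb x); simpl; nra.
  - assert (Ht' : 0 < tau < 1) by lra. assert (T := ln_norm_pos tau Ht').
    assert (HB := ln_pen_growth tau Ht' (Rabs x) Hx).
    assert (E : (ln (1 + / tau) + Rabs x) / ln (1 + / tau) = 1 + Rabs x / ln (1 + / tau))
      by (field; lra).
    assert (ln (1 + / tau * Rabs x) / ln (1 + / tau)
            <= (ln (1 + / tau) + Rabs x) / ln (1 + / tau))
      by (apply Rmult_le_compat_r; [left; apply Rinv_0_lt_compat|]; lra).
    assert (D := div_ln_norm_le tau Ht' (Rabs x) Hx). lra.
Qed.

Lemma pen_increment tau x z d : 0 <= tau < 1 -> z <> 0 -> 0 <= d -> Rabs x <= Rabs z + d ->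
  pen tau x - pen tau z <= d / Rabs z * inv_log_inv tau.
Proof.
  intros Ht Hz Hd Hxz. assert (Pz : 0 < Rabs z) by (apply Rabs_pos_lt; auto).
  assert (Q : 0 <= d / Rabs z) by (apply Rmult_le_pos; [|left; apply Rinv_0_lt_compat]; auto).
  assert (L := inv_log_inv_nonneg tau Ht).
  unfold pen, inv_log_inv in *. destruct (Req_dec_T tau 0).
  - rewrite (nzb_nz z Hz). destruct (nzb x); simpl; nra.
  - assert (Ht' : 0 < tau < 1) by lra. assert (T := ln_norm_pos tau Ht').
    assert (HS := ln_pen_increment tau Ht' (Rabs z) (Rabs x) d Pz (Rabs_pos x) Hd Hxz).
    assert (ln (1 + / tau * Rabs x) / ln (1 + / tau) - ln (1 + / tau * Rabs z) / ln (1 + / tau)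
            <= d / Rabs z / ln (1 + / tau)).
    { unfold Rdiv at 1 2 4. rewrite <- Rmult_minus_distr_r.
      apply Rmult_le_compat_r; [left; apply Rinv_0_lt_compat|]; lra. }
    assert (D := div_ln_norm_le tau Ht' (d / Rabs z) Q). lra.
Qed.

(* Penalty gap between the truth x and the estimate z, with d >= |x| - |z|,
   c2 = 1/ic2 bounding |z| from below when z <> 0 and c3 = 1/ic3 bounding |x|:
   the gap vanishes off the support of x and is at most d * K on it. *)
Lemma pen_gap tau x z d ic2 ic3 : 0 <= tau < 1 -> 0 <= d -> Rabs x <= Rabs z + d ->
  (x <> 0 -> 1 <= ic3 * Rabs x) -> (z <> 0 -> 1 <= ic2 * Rabs z) -> 0 <= ic2 -> 0 <= ic3 ->
  pen tau x - pen tau z <= ind (nzb x) * (d * ((2 * ic2 + 1) * inv_log_inv tau + ic3)).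
Proof.
  intros Ht Hd Hxz H3 H2 P2 P3. assert (L := inv_log_inv_nonneg tau Ht).
  assert (Pz := pen_nonneg tau z Ht). assert (Px := Rabs_pos x).
  assert (Hdl : 0 <= d * inv_log_inv tau) by nra.
  assert (Hdc : 0 <= d * ic2 * inv_log_inv tau) by nra.
  destruct (nzb x) eqn:Ex; simpl; [apply nzb_true in Ex | apply nzb_false in Ex].
  - destruct (Req_dec z 0) as [Z|Z].
    + (* the estimate misses a true coordinate: then |x| <= d and 1 <= ic3 d *)
      subst z. rewrite pen_0. rewrite Rabs_R0 in Hxz.
      assert (B := pen_le tau x Ht).
      assert (Rabs x * inv_log_inv tau <= d * inv_log_inv tau) by (apply Rmult_le_compat_r; lra).
      assert (ic3 * Rabs x <= ic3 * d) by (apply Rmult_le_compat_l; lra).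
      specialize (H3 Ex). nra.
    + assert (B := pen_increment tau x z d Ht Z Hd Hxz).
      assert (Pz' : 0 < Rabs z) by (apply Rabs_pos_lt; auto).
      assert (d / Rabs z <= d * ic2).
      { apply Rmult_le_compat_l; auto. apply (Rmult_le_reg_l (Rabs z)); auto.
        rewrite Rinv_r by lra. specialize (H2 Z). lra. }
      assert (d / Rabs z * inv_log_inv tau <= d * ic2 * inv_log_inv tau)
        by (apply Rmult_le_compat_r; auto).
      assert (0 <= d * ic3) by nra. nra.
  - subst x. rewrite pen_0. lra.
Qed.

(* The constant K = (2/c2 + 1)/log(1/tau) + 1/c3 multiplying the penalty gaps,
   for the truth b and the estimate b'. *)
Definition pen_const (p : nat) (tau : R) (b b' : nat -> R) : R :=
  (2 * inv_min_abs_supp p b' + 1) * inv_log_inv tau + inv_min_abs_supp p b.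

Lemma pen_const_nonneg p tau b b' : 0 <= tau < 1 -> 0 <= pen_const p tau b b'.
Proof.
  intros Ht. destruct (inv_min_spec p b) as [A _]. destruct (inv_min_spec p b') as [B _].
  assert (L := inv_log_inv_nonneg tau Ht). unfold pen_const. nra.
Qed.

Lemma coord_penalty_gap p tau b b' : 0 <= tau < 1 ->
  fsum p (fun j => pen tau (b j)) - fsum p (fun j => pen tau (b' j))
  <= pen_const p tau b b' * (sqrt (INR (card_nz p b)) * norm2 p (fun j => b' j - b j)).
Proof.
  intros Ht. eapply Rle_trans;
    [|apply Rmult_le_compat_l; [apply pen_const_nonneg; auto | apply support_sum_le]].
  rewrite <- fsum_minus, <- fsum_scal. apply fsum_le. intros j Hj.
  destruct (inv_min_spec p b') as [P2 H2]. destruct (inv_min_spec p b) as [P3 H3].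
  eapply Rle_trans.
  - apply (pen_gap tau (b j) (b' j) (Rabs (b' j - b j))); auto; [apply Rabs_pos|].
    replace (b j) with (b' j - (b' j - b j)) at 1 by ring.
    unfold Rminus at 1. eapply Rle_trans; [apply Rabs_triang|]. rewrite Rabs_Ropp. lra.
  - right. unfold pen_const. ring.
Qed.

Lemma group_penalty_gap p m grp tau b b' : 0 <= tau < 1 ->
  fsum m (fun k => sqrt (INR (gsize p grp k)) * pen tau (gnorm p grp b k))
  - fsum m (fun k => sqrt (INR (gsize p grp k)) * pen tau (gnorm p grp b' k))
  <= pen_const p tau b b' * (sqrt (INR (qR p m grp b)) * norm2 p (fun j => b' j - b j)).
Proof.
  intros Ht. eapply Rle_trans;
    [|apply Rmult_le_compat_l; [apply pen_const_nonneg; auto | apply active_groups_sum_le]].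
  rewrite <- fsum_minus, <- fsum_scal. apply fsum_le. intros k Hk.
  destruct (inv_min_spec p b') as [P2 _]. destruct (inv_min_spec p b) as [P3 _].
  assert (D := pen_gap tau (gnorm p grp b k) (gnorm p grp b' k) (gnorm p grp (fun j => b' j - b j) k)
     (inv_min_abs_supp p b') (inv_min_abs_supp p b) Ht (gnorm_pos _ _ _ _)).
  rewrite !Rabs_pos_eq in D by apply gnorm_pos.
  specialize (D (gnorm_triangle p grp b' b k) (inv_min_gnorm p grp b k)
                (inv_min_gnorm p grp b' k) P2 P3).
  rewrite <- Rmult_minus_distr_l. eapply Rle_trans.
  - apply Rmult_le_compat_l; [apply sqrt_pos | exact D].
  - right. unfold pen_const. ring.
Qed.

Definition score (n p : nat) (X : nat -> nat -> R) (y b : nat -> R) (j : nat) : R :=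
  fsum n (fun i => X i j * (y i - Xmul p X b i)).

Lemma Xmul_sub p X b b' i : Xmul p X b' i = Xmul p X b i + Xmul p X (fun j => b' j - b j) i.
Proof. unfold Xmul. rewrite <- fsum_plus. apply fsum_ext. intros; ring. Qed.

Lemma Xmul_adjoint n p X e v :
  fsum n (fun i => e i * Xmul p X v i) = fsum p (fun j => v j * fsum n (fun i => X i j * e i)).
Proof.
  unfold Xmul. rewrite (fsum_ext n _ (fun i => fsum p (fun j => v j * (X i j * e i)))).
  - rewrite fsum_swap. apply fsum_ext. intros j _. apply fsum_scal.
  - intros i _. rewrite <- fsum_scal. apply fsum_ext; intros; ring.
Qed.

Lemma fit_expand n p X y lam b b' :
  fit n p X y lam b' = fit n p X y lam b
    + fsum n (fun i => Xmul p X (fun j => b' j - b j) i ^ 2)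
    - 2 * fsum p (fun j => (b' j - b j) * score n p X y b j)
    + lam * (fsum p (fun j => (b' j - b j) ^ 2) + 2 * fsum p (fun j => b j * (b' j - b j))).
Proof.
  unfold fit. set (D := Xmul p X (fun j => b' j - b j)).
  assert (E1 : fsum n (fun i => (y i - Xmul p X b' i) ^ 2) =
     fsum n (fun i => (y i - Xmul p X b i) ^ 2)
     - 2 * fsum n (fun i => (y i - Xmul p X b i) * D i) + fsum n (fun i => D i ^ 2)).
  { rewrite <- fsum_scal, <- fsum_minus, <- fsum_plus. apply fsum_ext. intros i _.
    rewrite (Xmul_sub p X b b'). fold (D i). ring. }
  assert (E2 : fsum p (fun j => b' j ^ 2) = fsum p (fun j => b j ^ 2)
     + (fsum p (fun j => (b' j - b j) ^ 2) + 2 * fsum p (fun j => b j * (b' j - b j)))).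
  { rewrite <- fsum_scal, <- !fsum_plus. apply fsum_ext. intros; ring. }
  rewrite E1, E2. unfold D. rewrite Xmul_adjoint. unfold score. ring.
Qed.

Lemma kappa_quadratic n p X kappa v : (0 < n)%nat -> is_kappa n p X kappa ->
  INR n * kappa * (norm2 p v * norm2 p v) <= fsum n (fun i => Xmul p X v i ^ 2).
Proof.
  intros Hn [_ Hk]. assert (Hnp : 0 < INR n) by (apply lt_0_INR; lia).
  set (N := norm2 p v). assert (N0 : 0 <= N) by apply sqrt_pos.
  assert (Q0 : 0 <= fsum n (fun i => Xmul p X v i ^ 2)) by (apply fsum_nonneg; intros; nra).
  destruct (Req_dec N 0) as [Z|Z]; [rewrite Z, !Rmult_0_r; auto|].
  assert (NP : 0 < N) by lra.
  (* apply the definition to the unit vector v / N *)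
  specialize (Hk (fun j => v j / N)).
  assert (Hw : norm2 p (fun j => v j / N) = 1).
  { unfold norm2. rewrite (fsum_ext p _ (fun j => / (N * N) * v j ^ 2)) by (intros; field; lra).
    rewrite fsum_scal, <- norm2_sq. fold N. replace (/ (N * N) * (N * N)) with 1 by (field; lra).
    apply sqrt_1. }
  assert (EX : fsum n (fun i => Xmul p X (fun j => v j / N) i ^ 2)
               = / (N * N) * fsum n (fun i => Xmul p X v i ^ 2)).
  { rewrite <- fsum_scal. apply fsum_ext. intros i _. unfold Xmul.
    rewrite (fsum_ext p (fun j => X i j * (v j / N)) (fun j => / N * (X i j * v j)))
      by (intros; field; lra).
    rewrite fsum_scal. field. lra. }
  specialize (Hk Hw). rewrite EX in Hk.
  apply (Rmult_le_compat_l (INR n * (N * N))) in Hk; [|nra].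
  replace (INR n * (N * N) * (/ (N * N) * fsum n (fun i => Xmul p X v i ^ 2) / INR n))
    with (fsum n (fun i => Xmul p X v i ^ 2)) in Hk by (field; lra).
  nra.
Qed.

(* Noise term: b' - b vanishes off supp b u supp b', so <b' - b, g> is at most
   ||g||_inf (sqrt s + sqrt s') ||b' - b||. *)
Lemma score_inner_le p b b' g G : 0 <= G -> (forall j, (j < p)%nat -> Rabs (g j) <= G) ->
  fsum p (fun j => (b' j - b j) * g j)
  <= G * ((sqrt (INR (card_nz p b)) + sqrt (INR (card_nz p b'))) * norm2 p (fun j => b' j - b j)).
Proof.
  intros G0 HG. rewrite Rmult_plus_distr_r.
  eapply Rle_trans; [|apply Rmult_le_compat_l; [exact G0 | apply Rplus_le_compat; apply support_sum_le]].
  rewrite <- fsum_plus, <- fsum_scal. apply fsum_le. intros j Hj.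
  set (dj := b' j - b j). assert (Pd := Rabs_pos dj).
  assert (A1 : dj * g j <= Rabs dj * G).
  { eapply Rle_trans; [apply Rle_abs|]. rewrite Rabs_mult. apply Rmult_le_compat_l; auto. }
  assert (A2 : Rabs dj <= ind (nzb (b j)) * Rabs dj + ind (nzb (b' j)) * Rabs dj).
  { destruct (nzb (b j)) eqn:E1; destruct (nzb (b' j)) eqn:E2; simpl; try lra.
    apply nzb_false in E1. apply nzb_false in E2. unfold dj. rewrite E1, E2, Rminus_0_r, Rabs_R0. lra. }
  nra.
Qed.

Lemma ridge_inner_le p b b' :
  - fsum p (fun j => b j * (b' j - b j))
  <= max_abs_on_supp p b * (sqrt (INR (card_nz p b)) * norm2 p (fun j => b' j - b j)).
Proof.
  destruct (max_on_spec p b) as [M0 HM].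
  eapply Rle_trans; [|apply Rmult_le_compat_l; [exact M0 | apply support_sum_le]].
  rewrite <- fsum_scal, <- fsum_opp. apply fsum_le. intros j Hj.
  destruct (nzb (b j)) eqn:E; simpl; [|apply nzb_false in E; rewrite E; lra].
  assert (- (b j * (b' j - b j)) <= Rabs (b j) * Rabs (b' j - b j)).
  { rewrite <- Rabs_mult, <- Rabs_Ropp. apply Rle_abs. }
  assert (Rabs (b j) * Rabs (b' j - b j) <= max_abs_on_supp p b * Rabs (b' j - b j))
    by (apply Rmult_le_compat_r; [apply Rabs_pos | auto]).
  lra.
Qed.

Section BasicInequality.
Variables (n p m : nat) (grp : nat -> nat) (X : nat -> nat -> R) (y beta bhat : nat -> R).
Variables (lam rho1 rho2 tau kappa : R).
Hypotheses (Hn : (0 < n)%nat) (Hlam : 0 <= lam) (Hrho1 : 0 <= rho1) (Hrho2 : 0 <= rho2).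
Hypothesis Htau : 0 <= tau < 1.
Hypothesis Hkappa : is_kappa n p X kappa.
Hypothesis Hopt : Vobj n p m grp X y lam rho1 rho2 tau bhat <= Vobj n p m grp X y lam rho1 rho2 tau beta.

Local Notation N := (norm2 p (fun j => bhat j - beta j)).
Local Notation sqs := (sqrt (INR (card_nz p beta))).
Local Notation sqsh := (sqrt (INR (card_nz p bhat))).
Local Notation sqQ := (sqrt (INR (qR p m grp beta))).
Local Notation G := (XtEps_inf n p X y beta).
Local Notation M := (max_abs_on_supp p beta).
Local Notation K := (pen_const p tau beta bhat).

Lemma basic_inequality :
  (INR n * kappa + lam) * (N * N)
  <= (2 * G * (sqs + sqsh) + 2 * lam * M * sqs + rho1 * K * sqs + rho2 * K * sqQ) * N.
Proof.
  assert (Hb := Hopt). rewrite !Vobj_eq, (fit_expand n p X y lam beta bhat) in Hb.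
  rewrite <- (norm2_sq p (fun j => bhat j - beta j)) in Hb.
  assert (HG : forall j, (j < p)%nat -> Rabs (score n p X y beta j) <= G)
    by exact (proj2 (fmax_spec p (fun j => Rabs (score n p X y beta j)))).
  assert (G0 : 0 <= G) by exact (proj1 (fmax_spec p (fun j => Rabs (score n p X y beta j)))).
  assert (Noise := score_inner_le p beta bhat _ G G0 HG).
  assert (Ridge := ridge_inner_le p beta bhat).
  assert (Ridge' := Rmult_le_compat_l lam _ _ Hlam Ridge).
  assert (P1 := Rmult_le_compat_l rho1 _ _ Hrho1 (coord_penalty_gap p tau beta bhat Htau)).
  assert (P2 := Rmult_le_compat_l rho2 _ _ Hrho2 (group_penalty_gap p m grp tau beta bhat Htau)).
  assert (Kq := kappa_quadratic n p X kappa (fun j => bhat j - beta j) Hn Hkappa).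
  rewrite Rmult_minus_distr_l in P1, P2.
  nra.
Qed.
End BasicInequality.

(* With 1 <= s <= q, the linear coefficient of the basic inequality is at most
   sqrt(q) times n times the bracket of the theorem; the key step is
   sqrt(sh) = 2 sqrt(s) sqrt(sh/(4s)) <= 2 sqrt(q) sqrt(sh/(4s)). *)
Lemma coefficient_le s sh q G M lam K r1 r2 : 1 <= s <= q -> 0 <= sh ->
  0 <= G -> 0 <= M -> 0 <= lam -> 0 <= K -> 0 <= r1 -> 0 <= r2 ->
  2 * G * (sqrt s + sqrt sh) + 2 * lam * M * sqrt s + r1 * K * sqrt s + r2 * K * sqrt q
  <= sqrt q * (4 * (1 + sqrt (sh / (4 * s))) * G + 2 * M * lam + K * (r1 + r2)).
Proof.
  intros [S1 SQ] Sh0 G0 M0 L0 K0 R1 R2.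
  assert (sqSQ : sqrt s <= sqrt q) by (apply sqrt_le_1_alt; auto).
  set (r := sqrt (sh / (4 * s))).
  assert (r0 : 0 <= r) by apply sqrt_pos.
  assert (sQ0 := sqrt_pos q). assert (sS0 := sqrt_pos s). assert (sSh0 := sqrt_pos sh).
  assert (sqSh : sqrt sh <= 2 * sqrt q * r).
  { apply Rsqr_incr_0_var; [|nra]. unfold Rsqr.
    assert (0 <= sh / (4 * s)) by (apply Rmult_le_pos; [lra | left; apply Rinv_0_lt_compat; lra]).
    replace (2 * sqrt q * r * (2 * sqrt q * r)) with (4 * (sqrt q * sqrt q) * (r * r)) by ring.
    unfold r. rewrite !sqrt_sqrt by lra.
    replace (4 * q * (sh / (4 * s))) with (q * sh / s) by (field; lra).
    apply (Rmult_le_reg_l s); [lra|]. replace (s * (q * sh / s)) with (q * sh) by (field; lra). nra. }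
  assert (G * sqrt s <= G * sqrt q) by (apply Rmult_le_compat_l; auto).
  assert (G * sqrt sh <= G * (2 * sqrt q * r)) by (apply Rmult_le_compat_l; auto).
  assert (lam * M * sqrt s <= lam * M * sqrt q) by (apply Rmult_le_compat_l; nra).
  assert (r1 * K * sqrt s <= r1 * K * sqrt q) by (apply Rmult_le_compat_l; nra).
  nra.
Qed.

Lemma quadratic_to_linear nr kp N A B sq : 0 < nr -> 0 < kp -> 0 <= N -> 0 <= sq -> 0 <= B ->
  nr * kp * (N * N) <= A * N -> A <= sq * (nr * B) -> N <= sq / kp * B.
Proof.
  intros Hn Hk HN Hs HB Hq HA.
  replace (sq / kp * B) with ((sq * B) / kp) by (field; lra).
  apply Rmult_le_reg_l with kp; [lra|]. rewrite Rmult_div_assoc, Rmult_div_r by lra.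
  destruct (Req_dec N 0) as [Z|Z]; [subst N; nra|].
  assert (nr * kp * N <= A) by (apply Rmult_le_reg_r with N; nra).
  apply Rmult_le_reg_l with nr; nra.
Qed.

Theorem theorem1
  (n p m : nat) (grp : nat -> nat)
  (X : nat -> nat -> R) (y beta : nat -> R)
  (lam rho1 rho2 tau kappa : R) (bhat : nat -> R)
  (Hn : (0 < n)%nat)
  (Hgrp : is_group_partition p m grp)
  (Hs : (1 <= card_nz p beta)%nat)
  (Hlam : 0 <= lam) (Hrho1 : 0 <= rho1) (Hrho2 : 0 <= rho2)
  (Htau : 0 <= tau < 1)
  (Hmin : forall b' : nat -> R,
      Vobj n p m grp X y lam rho1 rho2 tau bhat <= Vobj n p m grp X y lam rho1 rho2 tau b')
  (Hmax : (1 <= Nat.max (qR p m grp beta) (card_nz p bhat) <= p)%nat)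
  (Hkappa : is_kappa n p X kappa)
  (Hpos : kappa + lam / INR n > 0) :
  norm2 p (fun j => bhat j - beta j)
  <= sqrt (INR (qR p m grp beta)) / (kappa + lam / INR n)
     * ( 4 * (1 + sqrt (INR (card_nz p bhat) / (4 * INR (card_nz p beta))))
             * (XtEps_inf n p X y beta / INR n)
       + 2 * max_abs_on_supp p beta * (lam / INR n)
       + ((2 * inv_min_abs_supp p bhat + 1) * inv_log_inv tau + inv_min_abs_supp p beta)
             * ((rho1 + rho2) / INR n) ).
Proof.
  change ((2 * inv_min_abs_supp p bhat + 1) * inv_log_inv tau + inv_min_abs_supp p beta)
    with (pen_const p tau beta bhat).
  assert (Hnp : 0 < INR n) by (apply lt_0_INR; lia).
  assert (S1 : 1 <= INR (card_nz p beta)) by (apply (le_INR 1); exact Hs).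
  assert (SQ := card_nz_le_qR p m grp beta Hgrp).
  assert (Sh0 := pos_INR (card_nz p bhat)).
  assert (G0 : 0 <= XtEps_inf n p X y beta)
    by exact (proj1 (fmax_spec p (fun j => Rabs (score n p X y beta j)))).
  assert (M0 := proj1 (max_on_spec p beta)).
  assert (K0 := pen_const_nonneg p tau beta bhat Htau).
  assert (Basic := basic_inequality n p m grp X y beta bhat lam rho1 rho2 tau kappa
                     Hn Hlam Hrho1 Hrho2 Htau Hkappa (Hmin beta)).
  assert (Coef := coefficient_le _ (INR (card_nz p bhat)) _ _ _ lam _ rho1 rho2
                    (conj S1 SQ) Sh0 G0 M0 Hlam K0 Hrho1 Hrho2).
  set (B := 4 * (1 + sqrt (INR (card_nz p bhat) / (4 * INR (card_nz p beta))))
              * (XtEps_inf n p X y beta / INR n)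
            + 2 * max_abs_on_supp p beta * (lam / INR n)
            + pen_const p tau beta bhat * ((rho1 + rho2) / INR n)).
  (* n B is the bracket appearing in coefficient_le *)
  assert (HnB : INR n * B = 4 * (1 + sqrt (INR (card_nz p bhat) / (4 * INR (card_nz p beta))))
                 * XtEps_inf n p X y beta + 2 * max_abs_on_supp p beta * lam
                 + pen_const p tau beta bhat * (rho1 + rho2)) by (unfold B; field; lra).
  assert (B0 : 0 <= B).
  { assert (0 <= INR n * B); [|nra]. rewrite HnB.
    assert (R0 := sqrt_pos (INR (card_nz p bhat) / (4 * INR (card_nz p beta)))).
    assert (0 <= (1 + sqrt (INR (card_nz p bhat) / (4 * INR (card_nz p beta))))
                 * XtEps_inf n p X y beta) by (apply Rmult_le_pos; lra).
    assert (0 <= max_abs_on_supp p beta * lam) by (apply Rmult_le_pos; lra).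
    assert (0 <= pen_const p tau beta bhat * (rho1 + rho2)) by (apply Rmult_le_pos; lra).
    lra. }
  eapply (quadratic_to_linear (INR n));
    [exact Hnp | exact Hpos | apply sqrt_pos | apply sqrt_pos | exact B0 | |].
  - replace (INR n * (kappa + lam / INR n)) with (INR n * kappa + lam) by (field; lra).
    exact Basic.
  - rewrite HnB. exact Coef.
Qed.
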